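(* Let $(\Sigma_+,\Sigma_-,N_1,N_2,N_3)$ be a solution of the Wainwright–Hsu system satisfying the constraint, with $N_1=0$, $N_2,N_3>0$ and $\Sigma_-^2+(N_2-N_3)^2>0$. Then for every $p>1$, $1+\Sigma_+\in L^p([0,\infty))$.
   Context: Wainwright–Hsu system: for functions $N_1,N_2,N_3,\Sigma_+,\Sigma_-$ of $\tau\in\mathbb{R}$ (prime denotes $d/d\tau$), $N_1'=(q-4\Sigma_+)N_1$, $N_2'=(q+2\Sigma_++2\sqrt3\Sigma_-)N_2$, $N_3'=(q+2\Sigma_+-2\sqrt3\Sigma_-)N_3$, $\Sigma_+'=-(2-q)\Sigma_+-3S_+$, $\Sigma_-'=-(2-q)\Sigma_--3S_-$, where $q=2(\Sigma_+^2+\Sigma_-^2)$, $S_+=\frac12[(N_2-N_3)^2-N_1(2N_1-N_2-N_3)]$, $S_-=\frac{\sqrt3}{2}(N_3-N_2)(N_1-N_2-N_3)$, together with the constraint $\Sigma_+^2+\Sigma_-^2+\frac34[N_1^2+N_2^2+N_3^2-2(N_1N_2+N_2N_3+N_1N_3)]=1$. Solutions exist for all $\tau\in\mathbb{R}$. *)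

From HB Require Import structures.
From mathcomp Require Import all_boot all_order all_algebra.
From mathcomp Require Import all_classical all_reals all_analysis.
Set Implicit Arguments. Unset Strict Implicit. Unset Printing Implicit Defensive.
Import Order.TTheory GRing.Theory Num.Theory.
Import numFieldNormedType.Exports.
Local Open Scope ring_scope.

Section WH.
Variable R : realType.

Definition WH_q (Sp Sm : R) : R := 2 * (Sp ^+ 2 + Sm ^+ 2).
Definition WH_Splus (N1 N2 N3 : R) : R :=
  2^-1 * ((N2 - N3) ^+ 2 - N1 * (2 * N1 - N2 - N3)).
Definition WH_Sminus (N1 N2 N3 : R) : R :=
  Num.sqrt 3 / 2 * (N3 - N2) * (N1 - N2 - N3).

Definition WH_solution (N1 N2 N3 Sp Sm : R -> R) : Prop :=
  forall t : R,
    [/\ is_derive t 1 N1 ((WH_q (Sp t) (Sm t) - 4 * Sp t) * N1 t)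
        /\ is_derive t 1 N2
          ((WH_q (Sp t) (Sm t) + 2 * Sp t + 2 * Num.sqrt 3 * Sm t) * N2 t),
        is_derive t 1 N3
          ((WH_q (Sp t) (Sm t) + 2 * Sp t - 2 * Num.sqrt 3 * Sm t) * N3 t),
        is_derive t 1 Sp
          (- (2 - WH_q (Sp t) (Sm t)) * Sp t - 3 * WH_Splus (N1 t) (N2 t) (N3 t)),
        is_derive t 1 Sm
          (- (2 - WH_q (Sp t) (Sm t)) * Sm t - 3 * WH_Sminus (N1 t) (N2 t) (N3 t))
      & Sp t ^+ 2 + Sm t ^+ 2
        + 3 / 4 * (N1 t ^+ 2 + N2 t ^+ 2 + N3 t ^+ 2
                   - 2 * (N1 t * N2 t + N2 t * N3 t + N1 t * N3 t)) = 1].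

End WH.

(* Write X := 1 + Sp and Y := sqrt 3 / 2 * (N2 - N3).  When N1 = 0 the system gives
   X' = -2 Y^2 X and the constraint reads Sm^2 + Y^2 = X (2 - X), so X decreases
   inside (0, 2); it suffices to prove X t = O(1 / t), since then |1 + Sp|^p is
   dominated by the integrable C (1 + t)^(-p).
   The function U := ln (N2 N3 / X^2) satisfies U' = 4 X.  If U is bounded, then
   U / 4 - t X, whose derivative is 2 t Y^2 X, is nondecreasing and bounds t X.
   Otherwise N2 N3 eventually dominates X^2, which makes the terms of the
   derivative of kappa := Sm Y / (3 (N2 + N3)) of order at most m X / 4.  Then
   G := ln (N2 N3 / X) - kappa - U / 4 is nondecreasing, so N2 N3 also dominates X,
   and Z := exp kappa / X satisfies Z' >= m / 3 for some m > 0.  Hence Z grows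
   linearly while X Z = exp kappa <= 3 / 2, and again X t = O(1 / t). *)

From HB Require Import structures.
From mathcomp Require Import all_boot all_order all_algebra.
From mathcomp Require Import all_classical all_reals all_analysis.
From mathcomp Require Import ring lra.
From mathcomp Require Import measurable_realfun.
Import Order.TTheory GRing.Theory Num.Theory.
Import numFieldNormedType.Exports.
Local Open Scope classical_set_scope.
Local Open Scope ring_scope.

Section real_calculus.
Context {R : realType}.
Implicit Types (s t : R).

Lemma is_derive_lnf {f : R -> R} {t df : R} : is_derive t 1 f df -> 0 < f t ->
  is_derive t 1 (fun s => ln (f s)) (df / f t).
Proof.
move=> fdf ft0; apply: is_derive_eq (is_derive1_comp (is_derive1_ln ft0) fdf) _.
by rewrite mulrC.
Qed.

Lemma is_derive_expRf {f : R -> R} {t df : R} : is_derive t 1 f df ->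
  is_derive t 1 (fun s => expR (f s)) (expR (f t) * df).
Proof. exact: is_derive1_comp. Qed.

Lemma is_derive_ge0_ndecr {f df : R -> R} {a : R} :
  (forall t, is_derive t 1 f (df t)) -> (forall t, a <= t -> 0 <= df t) ->
  forall s t, a <= s -> s <= t -> f s <= f t.
Proof.
move=> fdf df_ge0; apply: ger0_derive1_ndecry.
- by move=> t _; case: (fdf t).
- move=> t; rewrite in_itv/= andbT derive1E => /ltW le_at.
  by have [_ ->] := fdf t; exact: df_ge0.
- by apply: derivable_within_continuous => t _; case: (fdf t).
Qed.

Lemma ln_div_lt_cross {a b u v : R} : 0 < a -> 0 < b -> 0 < u -> 0 < v ->
  ln (a / b) < ln (u / v) -> a * v < b * u.
Proof.
move=> a0 b0 u0 v0; rewrite ltr_ln ?posrE ?divr_gt0//.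
rewrite -(ltr_pM2r (mulr_gt0 b0 v0)).
have -> : a / b * (b * v) = a * v by field; rewrite gt_eqF.
by have -> : u / v * (b * v) = b * u by field; rewrite gt_eqF.
Qed.

End real_calculus.

Section powR_integrability.
Context {R : realType}.
Local Notation mu := (@lebesgue_measure R).

Lemma is_derive_powR_shift (c : R) {t : R} : 0 < 1 + t ->
  is_derive t 1 (fun s => (1 + s) `^ c) (c * (1 + t) `^ (c - 1)).
Proof.
move=> t1; have d1 : is_derive t 1 (fun s : R => 1 + s) 1.
  have := is_deriveD (is_derive_cst (1 : R) t 1) (is_derive_id t 1).
  by rewrite add0r.
by apply: is_derive_eq (is_derive1_comp (is_derive1_powR c t1) d1) _; rewrite mulr1.
Qed.

Lemma cvg_powR_shiftN (a : R) : 0 < a -> (1 + t) `^ (- a) @[t --> +oo] --> 0.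
Proof.
move=> a0; apply/cvgr0Pnorm_lt => e e0.
set M := e^-1 `^ a^-1.
have M0 : 0 <= M by exact: powR_ge0.
exists M; split; first exact: num_real.
move=> t Mt; have t1 : 0 < 1 + t by lra.
rewrite ger0_norm ?powR_ge0// powRN -[E in _ < E]invrK.
rewrite ltf_pV2 ?posrE ?powR_gt0 ?invr_gt0//.
have -> : e^-1 = M `^ a by rewrite -powRrM mulVf ?powRr1 ?invr_ge0 ?ltW ?gt_eqF.
by rewrite gt0_ltr_powR ?nnegrE ?(ltW t1)//; lra.
Qed.

Lemma integrable_powR_shift (p : R) : 1 < p ->
  mu.-integrable `[0, +oo[ (fun t => ((1 + t) `^ (- p))%:E).
Proof.
move=> p1; have p1' : 0 < p - 1 by rewrite subr_gt0.
have p1_neq0 : 1 - p != 0 by rewrite subr_eq0 lt_eqF.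
pose F s := (1 - p)^-1 * (1 + s) `^ (1 - p).
have dF (t : R) : 0 < 1 + t -> is_derive t 1 F ((1 + t) `^ (- p)).
  move=> t1; have := is_derive_powR_shift (1 - p) t1 => ?.
  by rewrite /F; apply: is_derive_eq; rewrite /GRing.scale/= mulKf// addrAC subrr add0r.
have mpow : measurable_fun `[(0 : R), +oo[ (fun t : R => (1 + t) `^ (- p)).
  apply/measurable_funTS/(measurableT_comp (measurable_powR _)).
  exact: measurable_funD.
apply/integrableP; split; first exact/measurable_EFinP.
under eq_integral => t _ do rewrite gee0_abs ?lee_fin ?powR_ge0//.
rewrite (@ge0_continuous_FTC2y R _ F 0 0) ?ltry//.
- by move=> t _; exact: powR_ge0.
- apply: derivable_within_continuous => t.
  by rewrite in_itv/= andbT => t0; case: (is_derive_powR_shift (- p) (ltr_pwDl ltr01 t0)).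
- have := @cvgMl_tmp _ _ _ _ _ (1 - p)^-1 _ (cvg_powR_shiftN (p - 1) p1').
  by rewrite opprB mulr0; apply.
- by move=> t t0; case: (dF t (ltr_pwDl ltr01 (ltW t0))).
- apply/cvg_at_right_filter/differentiable_continuous/derivable1_diffP.
  by case: (dF 0 (ltr_pwDl ltr01 (lexx 0))).
- move=> t; rewrite in_itv/= andbT => t0.
  by rewrite derive1E; case: (dF t (ltr_pwDl ltr01 (ltW t0))).
Qed.

Lemma integrable_powR_decay {f : R -> R} {C p : R} : continuous f -> 1 < p ->
  (forall t, 0 <= t -> `|f t| * (1 + t) <= C) ->
  mu.-integrable `[0, +oo[ (fun t => (`|f t| `^ p)%:E).
Proof.
move=> cf p1 fC; have C0 : 0 <= C by apply: le_trans (fC 0 (lexx 0)); rewrite addr0 mulr1.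
apply: (@le_integrable _ _ _ mu _ _ _ (fun t => (C `^ p)%:E * ((1 + t) `^ (- p))%:E)%E).
- by [].
- apply/measurable_EFinP/measurable_funTS.
  apply: (measurableT_comp (measurable_powR _)); apply: measurableT_comp => //.
  exact: continuous_measurable_fun.
- move=> t; rewrite /= in_itv/= andbT => t0; have t1 : 0 < 1 + t by lra.
  rewrite lee_fin (ger0_norm (powR_ge0 _ _)).
  rewrite (ger0_norm (mulr_ge0 (powR_ge0 _ _) (powR_ge0 _ _))).
  rewrite powRN ler_pdivlMr ?powR_gt0//.
  rewrite -powRM ?(ltW t1)//; apply: ge0_ler_powR; rewrite ?nnegrE ?mulr_ge0 ?(ltW t1)//.
  + exact: le_trans ler01 (ltW p1).
  + exact: fC.
- by apply: integrableZl => //; exact: integrable_powR_shift.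
Qed.

End powR_integrability.

Section Bianchi_VII0.
Context {R : realType} {N1 N2 N3 Sp Sm : R -> R}.
Implicit Types (s t : R).
Hypothesis solution : WH_solution N1 N2 N3 Sp Sm.
Hypothesis N1_eq0 : forall t, N1 t = 0.
Hypothesis N2_gt0 : forall t, 0 < N2 t.
Hypothesis N3_gt0 : forall t, 0 < N3 t.
Hypothesis nondegenerate : forall t, 0 < Sm t ^+ 2 + (N2 t - N3 t) ^+ 2.

Local Notation sqrt3 := (Num.sqrt (3 : R)).

Lemma sqrt3_mul : sqrt3 * sqrt3 = 3.
Proof. by rewrite -expr2 sqr_sqrtr. Qed.

Definition X t := 1 + Sp t.
Definition Y t := sqrt3 / 2 * (N2 t - N3 t).
Definition Nsum t := N2 t + N3 t.
Definition Nprod t := N2 t * N3 t.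

Lemma Sm_sqr t : Sm t ^+ 2 = X t * (2 - X t) - Y t ^+ 2.
Proof.
have [_ _ _ _] := solution t; rewrite N1_eq0 => c.
(* Subtracting the constraint turns the goal into a field identity. *)
apply/eqP; rewrite -subr_eq0 -(subrr 1) -[L in _ == L - _]c; apply/eqP.
by rewrite /X /Y; field: sqrt3_mul.
Qed.

Lemma is_derive_X t : is_derive t 1 X (- 2 * Y t ^+ 2 * X t).
Proof.
have [_ _ dSp _ _] := solution t.
apply: is_derive_eq (is_deriveD (is_derive_cst (1 : R) t 1) dSp) _.
by rewrite /WH_q /WH_Splus N1_eq0 Sm_sqr /X /Y; field: sqrt3_mul.
Qed.

Lemma is_derive_Nprod t : is_derive t 1 Nprod ((4 * X t - 4 * Y t ^+ 2) * Nprod t).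
Proof.
have [[_ dN2] dN3 _ _ _] := solution t.
apply: is_derive_eq (is_deriveM dN2 dN3) _.
by rewrite /GRing.scale/= /WH_q Sm_sqr /X /Y /Nprod; field: sqrt3_mul.
Qed.

Lemma is_derive_Nsum t :
  is_derive t 1 Nsum ((2 * X t - 2 * Y t ^+ 2) * Nsum t + 4 * Sm t * Y t).
Proof.
have [[_ dN2] dN3 _ _ _] := solution t.
apply: is_derive_eq (is_deriveD dN2 dN3) _.
by rewrite /WH_q Sm_sqr /X /Y /Nsum; field: sqrt3_mul.
Qed.

Lemma is_derive_Y t :
  is_derive t 1 Y ((2 * X t - 2 * Y t ^+ 2) * Y t + 3 * Sm t * Nsum t).
Proof.
have [[_ dN2] dN3 _ _ _] := solution t.
apply: is_derive_eq (is_deriveZ (sqrt3 / 2) (is_deriveB dN2 dN3)) _.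
by rewrite /GRing.scale/= /WH_q Sm_sqr /X /Y /Nsum; field: sqrt3_mul.
Qed.

Lemma is_derive_Sm t : is_derive t 1 Sm (- 2 * Y t ^+ 2 * Sm t - 3 * Y t * Nsum t).
Proof.
have [_ _ _ dSm _] := solution t.
apply: is_derive_eq dSm _.
by rewrite /WH_q /WH_Sminus N1_eq0 Sm_sqr /X /Y /Nsum; field: sqrt3_mul.
Qed.

Lemma Nsum_gt0 t : 0 < Nsum t.
Proof. exact: addr_gt0. Qed.

Lemma Nprod_gt0 t : 0 < Nprod t.
Proof. exact: mulr_gt0. Qed.

Lemma X_gt0_lt2 t : 0 < X t < 2.
Proof.
have Y2 : Y t ^+ 2 = 3 / 4 * (N2 t - N3 t) ^+ 2 by rewrite /Y; field: sqrt3_mul.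
have := nondegenerate t; have := Sm_sqr t; rewrite Y2 => *; apply/andP; split; nra.
Qed.

Lemma X_gt0 t : 0 < X t.
Proof. by case/andP: (X_gt0_lt2 t). Qed.

Lemma X_lt2 t : X t < 2.
Proof. by case/andP: (X_gt0_lt2 t). Qed.

Definition kappa t := Sm t * Y t / (3 * Nsum t).
Definition cubic t := 2 * Y t ^+ 3 * Sm t / (3 * Nsum t).
Definition quartic t := 4 * Sm t ^+ 2 * Y t ^+ 2 / (3 * Nsum t ^+ 2).

Lemma is_derive_kappa t :
  is_derive t 1 kappa (Sm t ^+ 2 - Y t ^+ 2 - cubic t - quartic t).
Proof.
have S0 := Nsum_gt0 t; have S30 : 3 * Nsum t != 0 by rewrite mulf_neq0 ?gt_eqF.
have dV := @is_deriveV _ (fun s => 3 * Nsum s) t _ _ S30 (is_deriveZ 3 (is_derive_Nsum t)).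
apply: is_derive_eq (is_deriveM (is_deriveM (is_derive_Sm t) (is_derive_Y t)) dV) _.
rewrite /GRing.scale/= -[(Sm * Y) t]/(Sm t * Y t) /cubic /quartic.
by field; rewrite gt_eqF.
Qed.

Definition U t := ln (Nprod t / X t ^+ 2).

Lemma is_derive_U t : is_derive t 1 U (4 * X t).
Proof.
have X0 := X_gt0 t; have P0 := Nprod_gt0 t.
have X2 : X t ^+ 2 != 0 by rewrite expf_neq0 ?gt_eqF.
have dX2 := is_deriveM (is_derive_X t) (is_derive_X t).
have dq := is_deriveM (is_derive_Nprod t) (@is_deriveV _ (fun s => X s ^+ 2) t _ _ X2 dX2).
apply: is_derive_eq (is_derive_lnf dq _) _; first by rewrite divr_gt0 ?exprn_gt0.
rewrite /GRing.scale/= -[(Nprod * _) t]/(Nprod t / X t ^+ 2).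
by field; rewrite !gt_eqF.
Qed.

Definition G t := ln (Nprod t / X t) - kappa t - U t / 4.

Lemma is_derive_G t : is_derive t 1 G (X t + X t ^+ 2 + cubic t + quartic t).
Proof.
have X0 := X_gt0 t; have P0 := Nprod_gt0 t; have X1 : X t != 0 by rewrite gt_eqF.
have dq := is_deriveM (is_derive_Nprod t) (is_deriveV X1 (is_derive_X t)).
have dl := is_derive_lnf dq (divr_gt0 P0 X0).
have dU4 := is_deriveM (is_derive_U t) (is_derive_cst (4^-1 : R) t 1).
apply: is_derive_eq (is_deriveB (is_deriveB dl (is_derive_kappa t)) dU4) _.
rewrite /GRing.scale/= -[(Nprod * _) t]/(Nprod t / X t) Sm_sqr.
by field; rewrite !gt_eqF.
Qed.

Definition Z t := expR (kappa t) / X t.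

Lemma is_derive_Z t :
  is_derive t 1 Z (Z t * (X t * (2 - X t) - cubic t - quartic t)).
Proof.
have X1 : X t != 0 by rewrite gt_eqF ?X_gt0.
apply: is_derive_eq (is_deriveM (is_derive_expRf (is_derive_kappa t))
                                (is_deriveV X1 (is_derive_X t))) _.
by rewrite /GRing.scale/= /Z Sm_sqr; field.
Qed.

Lemma Y_sqr_le t : Y t ^+ 2 <= 2 * X t.
Proof. have := X_gt0 t; have := Sm_sqr t; have := sqr_ge0 (Sm t); nra. Qed.

Lemma abs_Y_Sm_le t : `|Y t * Sm t| <= X t.
Proof.
have := sqr_ge0 (X t); have := Sm_sqr t.
have := sqr_ge0 (Y t - Sm t); have := sqr_ge0 (Y t + Sm t).
rewrite ler_norml => *; apply/andP; split; nra.
Qed.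

Lemma Nsum_sqr t : Nsum t ^+ 2 = 4 / 3 * Y t ^+ 2 + 4 * Nprod t.
Proof. by rewrite /Nsum /Nprod /Y; field: sqrt3_mul. Qed.

Lemma abs_kappa_le t : `|kappa t| <= 3^-1.
Proof.
have S0 := Nsum_gt0 t.
have Sm1 : Sm t ^+ 2 <= 1.
  by rewrite Sm_sqr; have := sqr_ge0 (X t - 1); have := sqr_ge0 (Y t); nra.
have YS : Y t ^+ 2 <= Nsum t ^+ 2.
  by rewrite Nsum_sqr; have := Nprod_gt0 t; have := sqr_ge0 (Y t); lra.
have SmY : (Sm t * Y t) ^+ 2 <= Nsum t ^+ 2.
  by rewrite exprMn; apply: le_trans YS; rewrite -[leRHS]mul1r ler_wpM2r ?sqr_ge0.
rewrite /kappa normf_div (ger0_norm (ltW (mulr_gt0 _ S0)))// ler_pdivrMr ?mulr_gt0//.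
rewrite mulKf ?pnatr_eq0// -ler_sqr ?nnegrE ?(ltW S0)//.
by rewrite real_normK ?num_real.
Qed.

Lemma abs_cubic_le t m : 0 < m -> 64 * X t ^+ 2 <= 9 * m ^+ 2 * Nprod t ->
  `|cubic t| <= m / 4 * X t.
Proof.
move=> m0 PX; have X0 := X_gt0 t; have S0 := Nsum_gt0 t.
have SX : 16 * X t <= 3 * m * Nsum t.
  rewrite -ler_sqr ?nnegrE ?mulr_ge0 ?(ltW m0) ?(ltW X0) ?(ltW S0)//.
  rewrite !exprMn Nsum_sqr; have := mulr_ge0 (sqr_ge0 m) (sqr_ge0 (Y t)); nra.
have num : `|2 * Y t ^+ 3 * Sm t| <= 4 * X t ^+ 2.
  have -> : 2 * Y t ^+ 3 * Sm t = 2 * Y t ^+ 2 * (Y t * Sm t) by ring.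
  rewrite normrM (ger0_norm (mulr_ge0 (ler0n _ 2) (sqr_ge0 (Y t)))).
  have := abs_Y_Sm_le t; have := Y_sqr_le t; have := normr_ge0 (Y t * Sm t).
  have := sqr_ge0 (Y t); nra.
rewrite /cubic normf_div (ger0_norm (ltW (mulr_gt0 _ S0)))// ler_pdivrMr ?mulr_gt0//.
have := ler_wpM2l (ltW X0) SX; nra.
Qed.

Lemma quartic_ge0 t : 0 <= quartic t.
Proof.
apply: divr_ge0; last exact: mulr_ge0 (ler0n _ 3) (sqr_ge0 _).
by rewrite -mulrA mulr_ge0// -exprMn sqr_ge0.
Qed.

Lemma quartic_le t m : 0 < m -> 4 * X t <= 3 * m * Nprod t -> quartic t <= m / 4 * X t.
Proof.
move=> m0 PX; have X0 := X_gt0 t; have S0 := Nsum_gt0 t; have P0 := Nprod_gt0 t.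
have SmY : (Y t * Sm t) ^+ 2 <= X t ^+ 2.
  rewrite -real_normK ?num_real// ler_sqr ?nnegrE ?(ltW X0)//; exact: abs_Y_Sm_le.
have h1 := ler_wpM2l (ltW X0) PX.
have h2 := mulr_ge0 (mulr_ge0 (ltW m0) (ltW X0)) (sqr_ge0 (Y t)).
rewrite /quartic ler_pdivrMr ?mulr_gt0 ?exprn_gt0// Nsum_sqr; nra.
Qed.

Lemma X_continuous : continuous X.
Proof.
by move=> t; apply/differentiable_continuous/derivable1_diffP; case: (is_derive_X t).
Qed.

Lemma X_nincr s t : s <= t -> X t <= X s.
Proof.
move=> st; rewrite -lerN2.
apply: (@is_derive_ge0_ndecr _ (fun u => - X u) (fun u => 2 * Y u ^+ 2 * X u) s) => // u.
- by apply: is_derive_eq (is_deriveN (is_derive_X u)) _; ring.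
- by move=> _; rewrite mulr_ge0 ?(ltW (X_gt0 u))// mulr_ge0// sqr_ge0.
Qed.

Lemma U_ndecr s t : s <= t -> U s <= U t.
Proof.
apply: (is_derive_ge0_ndecr is_derive_U) (lexx s) => u _.
by rewrite mulr_ge0// ltW// X_gt0.
Qed.

Lemma G_deriv_ge0 t m : 0 < m <= 4 -> 64 * X t ^+ 2 <= 9 * m ^+ 2 * Nprod t ->
  0 <= X t + X t ^+ 2 + cubic t + quartic t.
Proof.
case/andP=> m0 m4 PX; have := abs_cubic_le t m m0 PX; rewrite ler_norml => /andP[c _].
have := quartic_ge0 t; have := X_gt0 t; have := sqr_ge0 (X t); nra.
Qed.

Lemma Z_rate_ge t m : 0 < m -> X t <= 2 - m ->
  64 * X t ^+ 2 <= 9 * m ^+ 2 * Nprod t -> 4 * X t <= 3 * m * Nprod t ->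
  m / 2 * X t <= X t * (2 - X t) - cubic t - quartic t.
Proof.
move=> m0 Xm PX1 PX2; have := abs_cubic_le t m m0 PX1; rewrite ler_norml => /andP[_ c].
have := quartic_le t m m0 PX2; have := X_gt0 t; nra.
Qed.

Lemma X_mul_Z_le t : X t * Z t <= 3 / 2.
Proof.
have X0 := X_gt0 t; have := abs_kappa_le t; rewrite ler_norml => /andP[_ k13].
rewrite /Z mulrC divfK ?gt_eqF//.
have := expR_ge1Dx (- kappa t); rewrite expRN.
have := expR_gt0 (kappa t); set e := expR (kappa t) => e0 ek.
have := ler_wpM2l (ltW e0) ek; rewrite mulfV ?gt_eqF//; nra.
Qed.

Lemma Nprod_dominates_of_U_gt m s t : 0 < m -> ln (64 / (9 * m ^+ 2)) < U s -> s <= t ->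
  64 * X t ^+ 2 <= 9 * m ^+ 2 * Nprod t.
Proof.
move=> m0 Us st; have Ut := lt_le_trans Us (U_ndecr s t st); rewrite /U in Ut.
apply/ltW; apply: ln_div_lt_cross Ut => //.
- by rewrite mulr_gt0// exprn_gt0.
- exact: Nprod_gt0.
- by rewrite exprn_gt0// X_gt0.
Qed.

Lemma Nprod_dominates_eventually m : 0 < m <= 4 ->
  (forall B, exists2 t, 0 <= t & B < U t) ->
  exists2 T, 0 <= T & forall t, T <= t ->
    64 * X t ^+ 2 <= 9 * m ^+ 2 * Nprod t /\ 4 * X t <= 3 * m * Nprod t.
Proof.
case/andP=> m0 m4 U_unbounded.
have [T1 T1_ge0 UT1] := U_unbounded (ln (64 / (9 * m ^+ 2))).
have PX1 := Nprod_dominates_of_U_gt m T1 _ m0 UT1.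
have G_ndecr t : T1 <= t -> G T1 <= G t.
  apply: (is_derive_ge0_ndecr is_derive_G) (lexx T1) => u /PX1.
  by apply: G_deriv_ge0; rewrite m0 m4.
have [T2 _ UT2] := U_unbounded (4 * (ln (4 / (3 * m)) - G T1 + 3^-1)).
exists (Num.max T1 T2) => [|t]; first by rewrite le_max T1_ge0.
rewrite ge_max => /andP[T1t T2t]; split; first exact: PX1.
have := abs_kappa_le t; rewrite ler_norml => /andP[k13 _].
have lnPX : ln (Nprod t / X t) = G t + kappa t + U t / 4 by rewrite /G; ring.
have := G_ndecr t T1t; have := U_ndecr T2 t T2t => *.
apply/ltW/ln_div_lt_cross; rewrite ?mulr_gt0 ?X_gt0 ?Nprod_gt0// lnPX; lra.
Qed.

Lemma Z_ge_linear m T : 0 < m ->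
  (forall t, T <= t -> [/\ X t <= 2 - m, 64 * X t ^+ 2 <= 9 * m ^+ 2 * Nprod t
                        & 4 * X t <= 3 * m * Nprod t]) ->
  forall t, T <= t -> Z T + m / 3 * (t - T) <= Z t.
Proof.
move=> m0 regime t Tt.
suff : Z T - m / 3 * (T - T) <= Z t - m / 3 * (t - T) by rewrite subrr mulr0 subr0; lra.
apply: (@is_derive_ge0_ndecr _ (fun u => Z u - m / 3 * (u - T))
  (fun u => Z u * (X u * (2 - X u) - cubic u - quartic u) - m / 3) T) => // u.
- apply: is_derive_eq (is_deriveB (is_derive_Z u)
    (is_deriveZ (m / 3) (is_deriveB (is_derive_id u 1) (is_derive_cst T u 1)))) _.
  by rewrite /GRing.scale/= subr0 mulr1.
- move=> /regime[Xm PX1 PX2]; rewrite subr_ge0.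
  have X0 := X_gt0 u; have := abs_kappa_le u; rewrite ler_norml => /andP[k13 _].
  have eZ : Z u * X u = expR (kappa u) by rewrite /Z divfK ?gt_eqF.
  have Z0 : 0 < Z u by rewrite /Z divr_gt0 ?expR_gt0.
  have := ler_wpM2l (ltW Z0) (Z_rate_ge u m m0 Xm PX1 PX2).
  have := expR_ge1Dx (kappa u); rewrite mulrCA -mulrA mulrC eZ; nra.
Qed.

Lemma X_mul_bounded_of_U_bounded B : (forall t, 0 <= t -> U t <= B) ->
  exists C, forall t, 0 <= t -> X t * (1 + t) <= C.
Proof.
move=> UB; exists ((B - U 0) / 4 + 2) => t t0.
pose h s := U s / 4 - s * X s.
have : h 0 <= h t.
  apply: (@is_derive_ge0_ndecr _ h (fun u => 2 * u * Y u ^+ 2 * X u) 0) => // u.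
  - have dU4 := is_deriveM (is_derive_U u) (is_derive_cst (4^-1 : R) u 1).
    apply: is_derive_eq (is_deriveB dU4 (is_deriveM (is_derive_id u 1) (is_derive_X u))) _.
    by rewrite /GRing.scale/=; field.
  - move=> u0; apply: mulr_ge0 (ltW (X_gt0 u)).
    exact: mulr_ge0 (mulr_ge0 (ler0n _ 2) u0) (sqr_ge0 _).
have := UB t t0; have := X_lt2 t; rewrite /h mul0r subr0; lra.
Qed.

Lemma X_mul_bounded_of_U_unbounded : (forall B, exists2 t, 0 <= t & B < U t) ->
  exists C, forall t, 0 <= t -> X t * (1 + t) <= C.
Proof.
move=> U_unbounded; set m := 2 - X 0.
have m0 : 0 < m by rewrite subr_gt0 X_lt2.
have m4 : 0 < m <= 4 by rewrite m0 /m; have := X_gt0 0; lra.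
have [T T0 PX] := Nprod_dominates_eventually m m4 U_unbounded.
have regime t : T <= t -> [/\ X t <= 2 - m, 64 * X t ^+ 2 <= 9 * m ^+ 2 * Nprod t
                               & 4 * X t <= 3 * m * Nprod t].
  move=> Tt; have [PX1 PX2] := PX t Tt; split=> //.
  by rewrite /m opprB addrC subrK; exact: X_nincr 0 t (le_trans T0 Tt).
have Z_lin := Z_ge_linear m T m0 regime.
have ZT0 : 0 < Z T by rewrite divr_gt0 ?expR_gt0 ?X_gt0.
have m9 : 0 <= 9 / m by rewrite divr_ge0 ?ltW.
exists (9 / m + 4 * T + 4) => t t0.
have X0 := X_gt0 t; have X2 := X_lt2 t.
have [tT|Tt] := lerP t (2 * T + 1).
  have := ler_wpM2r (ltW (ltr_pwDl ltr01 t0)) (ltW X2); lra.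
have Zt : m / 6 * (1 + t) <= Z t.
  have : T <= t by lra.
  by move=> /Z_lin; nra.
have : X t * (1 + t) <= 9 / m.
  rewrite ler_pdivlMr//; have := ler_wpM2l (ltW X0) Zt; have := X_mul_Z_le t; nra.
lra.
Qed.

Lemma X_mul_bounded : exists C, forall t, 0 <= t -> X t * (1 + t) <= C.
Proof.
have [[B UB]|U_unbounded] := pselect (exists B, forall t, 0 <= t -> U t <= B).
  exact: X_mul_bounded_of_U_bounded UB.
apply: X_mul_bounded_of_U_unbounded => B; apply: contrapT => noUt; apply: U_unbounded.
by exists B => t t0; rewrite leNgt; apply/negP => Bt; apply: noUt; exists t.
Qed.

Lemma integrable_powR_X p : 1 < p ->
  (@lebesgue_measure R).-integrable `[0, +oo[ (fun t => (`|X t| `^ p)%:E).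
Proof.
move=> p1; have [C XC] := X_mul_bounded.
apply: (integrable_powR_decay (C := C) X_continuous p1) => t t0.
by rewrite ger0_norm ?XC// ltW ?X_gt0.
Qed.

End Bianchi_VII0.

Theorem mainTheorem11 (R : realType) (N1 N2 N3 Sp Sm : R -> R) :
  WH_solution N1 N2 N3 Sp Sm ->
  (forall t, N1 t = 0) ->
  (forall t, 0 < N2 t) ->
  (forall t, 0 < N3 t) ->
  (forall t, 0 < Sm t ^+ 2 + (N2 t - N3 t) ^+ 2) ->
  forall p : R, 1 < p ->
    (lebesgue_measure : measure _ R).-integrable `[0, +oo[%classic
      (fun t => ((`|1 + Sp t|) `^ p)%:E).
Proof.
move=> solution N1_eq0 N2_gt0 N3_gt0 nondegenerate p p1.
exact: integrable_powR_X solution N1_eq0 N2_gt0 N3_gt0 nondegenerate p p1.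
Qed.
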